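(* Let $\mathsf{K}$ be a universal class of $\mathcal{L}$-algebras. If $\mathsf{K}$ has the amalgamation property, the variable projection property, and the conservative model extension property, then $\mathrm{Th}(\mathsf{K})$ has a model completion.
   Context: $\mathcal{L}$ is an algebraic first-order language (no relation symbols) with at least one constant symbol. Equations are atomic formulas; literals are equations and negated equations. $\mathsf{K}\models\alpha$ (for quantifier-free $\alpha$) means every member of $\mathsf{K}$ satisfies $\alpha$ under every assignment. For a conjunction of literals $\psi$, $\psi^+$ is the conjunction of the equations occurring positively in $\psi$. $\alpha(\overline{x})$ means the free variables of $\alpha$ lie in $\overline{x}$; $\overline{x},y$ is a finite set $\overline{x}$ plus a variable $y\notin\overline{x}$. A universal class is closed under isomorphic images, subalgebras and ultraproducts. A model completion of a theory $T$ is a model complete theory $T^*$ with the same universal consequences as $T$ such that for every model $M$ of $T$, $T^*$ plus the diagram of $M$ is complete. Amalgamation property: for $\mathbf{A},\mathbf{B},\mathbf{C}\in\mathsf{K}$ and embeddings $f\colon\mathbf{A}\to\mathbf{B}$, $g\colon\mathbf{A}\to\mathbf{C}$ there are $\mathbf{D}\in\mathsf{K}$ and embeddings $h,k$ with $hf=kg$. Variable projection property: for any finite $\overline{x},y$ and conjunction of equations $\varphi(\overline{x},y)$ there is a quantifier-free $\xi(\overline{x})$ with $\mathsf{K}\models\varphi\to\xi$ and, for every equation $\varepsilon(\overline{x})$, $\mathsf{K}\models\varphi\to\varepsilon$ implies $\mathsf{K}\models\xi\to\varepsilon$. Conservative model extension property: for any finite $\overline{x},y$ and conjunction of literals $\psi(\overline{x},y)$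 there is a quantifier-free $\chi(\overline{x})$ with (i) $\mathsf{K}\models\psi\to\chi$ and (ii) for every $\mathbf{A}\in\mathsf{K}$ generated by $\overline{a}\in A^{\overline{x}}$ with $\mathbf{A}\models\chi(\overline{a})$ and $\mathbf{A}\models\varepsilon(\overline{a})$ for every equation $\varepsilon(\overline{x})$ with $\mathsf{K}\models\psi^+\to\varepsilon$, there exist $\mathbf{B}\in\mathsf{K}$ extending $\mathbf{A}$ and $b\in B$ with $\mathbf{B}\models\psi(\overline{a},b)$. *)

From mathcomp Require Import all_boot.
Set Implicit Arguments. Unset Strict Implicit. Unset Printing Implicit Defensive.

Record language := Language { fsym : Type; arity : fsym -> nat }.

Definition has_constant (L : language) : Prop := exists c : fsym L, arity c = 0.

Section Syntax.
Variable L : language.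

Inductive term : Type :=
| Var : nat -> term
| App : forall f : fsym L, ('I_(arity f) -> term) -> term.

Inductive formula : Type :=
| Fls : formula
| Eqn : term -> term -> formula
| Neg : formula -> formula
| Conj : formula -> formula -> formula
| Disj : formula -> formula -> formula
| Imp : formula -> formula -> formula
| Ex : nat -> formula -> formula
| All : nat -> formula -> formula.

Definition Tru : formula := Neg Fls.

Fixpoint term_in (P : nat -> Prop) (t : term) : Prop :=
  match t with
  | Var n => P n
  | App f args => forall i, term_in P (args i)
  end.

Fixpoint fml_in (P : nat -> Prop) (phi : formula) : Prop :=
  match phi with
  | Fls => True
  | Eqn t1 t2 => term_in P t1 /\ term_in P t2
  | Neg p => fml_in P p
  | Conj p q | Disj p q | Imp p q => fml_in P p /\ fml_in P q
  | Ex x p | All x p => fml_in (fun n => n = x \/ P n) p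
  end.

Definition sentence (phi : formula) : Prop := fml_in (fun _ => False) phi.

Fixpoint qfree (phi : formula) : Prop :=
  match phi with
  | Fls | Eqn _ _ => True
  | Neg p => qfree p
  | Conj p q | Disj p q | Imp p q => qfree p /\ qfree q
  | Ex _ _ | All _ _ => False
  end.

Inductive universal : formula -> Prop :=
| univ_qf phi : qfree phi -> universal phi
| univ_all x phi : universal phi -> universal (All x phi).

(** An equation is a pair of terms; a literal is a signed equation
    (true = positive). Conjunctions are finite lists. *)
Definition equation := (term * term)%type.
Definition literal := (bool * equation)%type.

Definition eq_fml (e : equation) : formula := Eqn e.1 e.2.
Definition lit_fml (l : literal) : formula :=
  if l.1 then eq_fml l.2 else Neg (eq_fml l.2).

Definition big_conj (s : seq formula) : formula := foldr Conj Tru s.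
Definition conj_eqs (s : seq equation) : formula := big_conj (map eq_fml s).
Definition conj_lits (s : seq literal) : formula := big_conj (map lit_fml s).
Definition pos_part (s : seq literal) : seq equation :=
  [seq l.2 | l <- s & l.1].

End Syntax.

Arguments Var {L}.

Record algebra (L : language) := Algebra {
  carrier :> Type;
  interp : forall f : fsym L, ('I_(arity f) -> carrier) -> carrier }.
Arguments interp {L} a f args.

Section Semantics.
Variable L : language.

Fixpoint eval (A : algebra L) (v : nat -> A) (t : term L) : A :=
  match t with
  | Var n => v n
  | App f args => interp A f (fun i => eval v (args i))
  end.

Definition upd (A : Type) (v : nat -> A) (x : nat) (a : A) : nat -> A :=
  fun n => if n == x then a else v n.

Fixpoint sat (A : algebra L) (v : nat -> A) (phi : formula L) : Prop :=
  match phi with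
  | Fls => False
  | Eqn t1 t2 => eval v t1 = eval v t2
  | Neg p => ~ sat v p
  | Conj p q => sat v p /\ sat v q
  | Disj p q => sat v p \/ sat v q
  | Imp p q => sat v p -> sat v q
  | Ex x p => exists a : A, sat (upd v x a) p
  | All x p => forall a : A, sat (upd v x a) p
  end.

Definition holds (A : algebra L) (phi : formula L) : Prop :=
  forall v : nat -> A, sat v phi.

Definition is_hom (A B : algebra L) (e : A -> B) : Prop :=
  forall (f : fsym L) (args : 'I_(arity f) -> A),
    e (interp A f args) = interp B f (fun i => e (args i)).

Definition is_embedding (A B : algebra L) (e : A -> B) : Prop :=
  (forall a1 a2, e a1 = e a2 -> a1 = a2) /\ is_hom e.

Definition is_iso (A B : algebra L) (e : A -> B) : Prop :=
  is_embedding e /\ (forall b, exists a, e a = b).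

Definition is_elementary (A B : algebra L) (e : A -> B) : Prop :=
  is_embedding e /\
  forall (phi : formula L) (v : nat -> A), sat v phi <-> sat (fun n => e (v n)) phi.

Definition ultrafilter (I : Type) (U : (I -> Prop) -> Prop) : Prop :=
  [/\ U (fun _ => True), ~ U (fun _ => False),
      (forall S T : I -> Prop, U S -> (forall i, S i -> T i) -> U T),
      (forall S T : I -> Prop, U S -> U T -> U (fun i => S i /\ T i))
    & (forall S : I -> Prop, U S \/ U (fun i => ~ S i))].

(** B is (isomorphic to) the ultraproduct of the family A over U: there is a
    surjective homomorphism from the direct product onto B whose kernel is the
    U-almost-everywhere equality. *)
Definition is_ultraproduct (I : Type) (A : I -> algebra L)
    (U : (I -> Prop) -> Prop) (B : algebra L) : Prop :=
  exists pi : (forall i, A i) -> B,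
    [/\ (forall b, exists x, pi x = b),
        (forall (f : fsym L) (xs : 'I_(arity f) -> forall i, A i),
            pi (fun i => interp (A i) f (fun j => xs j i))
            = interp B f (fun j => pi (xs j)))
      & (forall x y, pi x = pi y <-> U (fun i => x i = y i))].

Definition iso_closed (K : algebra L -> Prop) : Prop :=
  forall (A B : algebra L) (e : A -> B), is_iso e -> K A -> K B.

(** Closure under subalgebras (stated via embeddings; together with
    closure under isomorphic images this is closure under subalgebras). *)
Definition sub_closed (K : algebra L -> Prop) : Prop :=
  forall (A B : algebra L) (e : A -> B), is_embedding e -> K B -> K A.

Definition ultraprod_closed (K : algebra L -> Prop) : Prop :=
  forall (I : Type) (A : I -> algebra L) (U : (I -> Prop) -> Prop) (B : algebra L),
    ultrafilter U -> (forall i, K (A i)) -> is_ultraproduct A U B -> K B.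

Definition universal_class (K : algebra L -> Prop) : Prop :=
  [/\ iso_closed K, sub_closed K & ultraprod_closed K].

Definition Kmodels (K : algebra L -> Prop) (alpha : formula L) : Prop :=
  forall A : algebra L, K A -> holds A alpha.

Definition in_vars (xs : seq nat) : nat -> Prop := fun n => n \in xs.
Definition in_vars_y (xs : seq nat) (y : nat) : nat -> Prop :=
  fun n => n \in xs \/ n = y.

Definition amalgamation (K : algebra L -> Prop) : Prop :=
  forall (A B C : algebra L) (f : A -> B) (g : A -> C),
    K A -> K B -> K C -> is_embedding f -> is_embedding g ->
    exists (D : algebra L) (h : B -> D) (k : C -> D),
      [/\ K D, is_embedding h, is_embedding k
        & forall a, h (f a) = k (g a)].

Definition var_projection (K : algebra L -> Prop) : Prop :=
  forall (xs : seq nat) (y : nat) (phi : seq (equation L)),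
    y \notin xs ->
    fml_in (in_vars_y xs y) (conj_eqs phi) ->
    exists xi : formula L,
      [/\ qfree xi, fml_in (in_vars xs) xi,
          Kmodels K (Imp (conj_eqs phi) xi)
        & forall eps : equation L,
            fml_in (in_vars xs) (eq_fml eps) ->
            Kmodels K (Imp (conj_eqs phi) (eq_fml eps)) ->
            Kmodels K (Imp xi (eq_fml eps))].

Definition generated_by (A : algebra L) (xs : seq nat) (a : nat -> A) : Prop :=
  forall c : A, exists t : term L, term_in (in_vars xs) t /\ eval a t = c.

Definition cons_model_ext (K : algebra L -> Prop) : Prop :=
  forall (xs : seq nat) (y : nat) (psi : seq (literal L)),
    y \notin xs ->
    fml_in (in_vars_y xs y) (conj_lits psi) ->
    exists chi : formula L,
      [/\ qfree chi, fml_in (in_vars xs) chi,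
          Kmodels K (Imp (conj_lits psi) chi)
        & forall (A : algebra L) (a : nat -> A),
            K A -> generated_by xs a -> sat a chi ->
            (forall eps : equation L,
                fml_in (in_vars xs) (eq_fml eps) ->
                Kmodels K (Imp (conj_eqs (pos_part psi)) (eq_fml eps)) ->
                sat a (eq_fml eps)) ->
            exists (B : algebra L) (e : A -> B) (b : B),
              [/\ K B, is_embedding e
                & sat (upd (fun n => e (a n)) y b) (conj_lits psi)]].

Definition theory := formula L -> Prop.

Definition model (T : theory) (M : algebra L) : Prop :=
  forall phi, T phi -> holds M phi.

Definition consequence (T : theory) (phi : formula L) : Prop :=
  forall M : algebra L, model T M -> holds M phi.

Definition Th (K : algebra L -> Prop) : theory :=
  fun phi => sentence phi /\ Kmodels K phi.

Definition model_complete (T : theory) : Prop :=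
  forall (M N : algebra L) (e : M -> N),
    model T M -> model T N -> is_embedding e -> is_elementary e.

Definition same_universal_consequences (T T' : theory) : Prop :=
  forall phi, sentence phi -> universal phi ->
    (consequence T phi <-> consequence T' phi).

(** T' together with the (atomic) diagram of M is complete: its models are
    exactly the models N of T' with an embedding of M (interpreting the new
    constants); completeness = it is consistent and any two such models
    satisfy the same sentences of the expanded language, i.e. the same
    formulas with parameters from M. *)
Definition diagram_complete (T' : theory) (M : algebra L) : Prop :=
  (exists (N : algebra L) (e : M -> N), model T' N /\ is_embedding e) /\
  forall (N1 N2 : algebra L) (e1 : M -> N1) (e2 : M -> N2),
    model T' N1 -> model T' N2 -> is_embedding e1 -> is_embedding e2 ->
    forall (phi : formula L) (v : nat -> M),
      sat (fun n => e1 (v n)) phi <-> sat (fun n => e2 (v n)) phi.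

Definition model_completion (T T' : theory) : Prop :=
  [/\ (forall phi, T' phi -> sentence phi),
      model_complete T',
      same_universal_consequences T T'
    & forall M : algebra L, model T M -> diagram_complete T' M].

End Semantics.

From Pilot Require Import Defs.
From mathcomp Require Import all_boot.
From mathcomp Require Import boolp classical_sets filter.
From Stdlib Require List.
Set Implicit Arguments. Unset Strict Implicit. Unset Printing Implicit Defensive.

(* For a conjunction of literals psi(xs, y), the conservative model extension
   property and the variable projection property (applied to psi^+) give
   quantifier-free chi(xs) and xi(xs); amalgamating over the subalgebra generated
   by the parameters shows that theta := chi /\ xi is implied by psi in K and that
   wherever theta holds in a member of K, psi(xs, y) is realized in an extension in K.
   The model completion T* is the universal theory of K together with the axioms
   forall xs, theta -> exists y, psi. Through disjunctive normal forms T* eliminates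
   quantifiers, which gives model completeness and the completeness of T* plus a
   diagram. By compactness (ultraproducts) every model of Th(K) lies in K, and it
   embeds into a model of T*: the union of an omega-chain in K each of whose links
   realizes all the axioms at once, again by compactness. *)

Section Formulas.
Variable L : language.
Implicit Types (t : term L) (phi : formula L).

Lemma upd_id (A : Type) (v : nat -> A) x : upd v x (v x) = v.
Proof. by apply: funext => n; rewrite /upd; case: eqP => // ->. Qed.

Lemma map_upd (A B : Type) (e : A -> B) (v : nat -> A) x a :
  (fun n => e (upd v x a n)) = upd (fun n => e (v n)) x (e a).
Proof. by apply: funext => n; rewrite /upd; case: ifP. Qed.

Lemma eq_in_upd (A : Type) (P : nat -> Prop) (v w : nat -> A) x a :
  (forall n, P n -> v n = w n) -> forall n, n = x \/ P n -> upd v x a n = upd w x a n.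
Proof. by move=> vw n [->|Pn]; rewrite /upd; case: eqP => // _; apply: vw. Qed.

Lemma term_in_mono (P Q : nat -> Prop) t :
  (forall n, P n -> Q n) -> term_in P t -> term_in Q t.
Proof. by elim: t => [n|f args IH] PQ /=; [apply: PQ|move=> H i; apply: IH]. Qed.

Lemma fml_in_mono phi (P Q : nat -> Prop) :
  (forall n, P n -> Q n) -> fml_in P phi -> fml_in Q phi.
Proof.
elim: phi P Q => //= [t1 t2|p IHp q IHq|p IHp q IHq|p IHp q IHq|x p IH|x p IH] P Q PQ;
  do ?[by move=> [/(term_in_mono PQ) ? /(term_in_mono PQ)]];
  do ?[by move=> [/(IHp _ _ PQ) ? /(IHq _ _ PQ)]];
  by apply: IH => n [->|/PQ]; [left|right].
Qed.

Lemma eq_in_eval (A : algebra L) (P : nat -> Prop) (v w : nat -> A) t :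
  term_in P t -> (forall n, P n -> v n = w n) -> eval v t = eval w t.
Proof.
elim: t => [n|f args IH] /= Ht vw; first exact: vw.
by congr (interp A f); apply: funext => i; apply: IH.
Qed.

Lemma eq_in_sat (A : algebra L) phi (P : nat -> Prop) (v w : nat -> A) :
  fml_in P phi -> (forall n, P n -> v n = w n) -> (sat v phi <-> sat w phi).
Proof.
elim: phi P v w => //= [t1 t2|p IHp|p IHp q IHq|p IHp q IHq|p IHp q IHq|x p IH|x p IH] P v w.
3-5: by move=> [H1 H2] vw; rewrite (IHp P v w) // (IHq P v w).
- by move=> [H1 H2] vw; rewrite (eq_in_eval H1 vw) (eq_in_eval H2 vw).
- by move=> H vw; rewrite (IHp P v w).
- move=> H vw; have E a : sat (upd v x a) p <-> sat (upd w x a) p.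
    by apply: (IH _ _ _ H); apply: eq_in_upd.
  by split=> -[a /E]; exists a.
- move=> H vw; have E a : sat (upd v x a) p <-> sat (upd w x a) p.
    by apply: (IH _ _ _ H); apply: eq_in_upd.
  by split=> Ha a; apply/E.
Qed.

Lemma eq_in_sat_upd (A : algebra L) xs y phi (v w : nat -> A) b :
  fml_in (in_vars_y xs y) phi -> (forall n, n \in xs -> v n = w n) ->
  sat (upd v y b) phi -> sat (upd w y b) phi.
Proof.
move=> Hf vw; apply: (eq_in_sat Hf _).1 => n [Hn|->]; rewrite /upd; case: eqP => // _.
exact: vw.
Qed.

Lemma eval_hom (A B : algebra L) (e : A -> B) (v : nat -> A) t :
  is_hom e -> eval (fun n => e (v n)) t = e (eval v t).
Proof.
move=> he; elim: t => [n|f args IH] //=.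
by rewrite he; congr (interp B f); apply: funext => i; rewrite IH.
Qed.

Lemma embedding_comp (A B C : algebra L) (h : A -> B) (k : B -> C) :
  is_embedding h -> is_embedding k -> is_embedding (fun x => k (h x)).
Proof. by move=> [hi hh] [ki kh]; split=> [x y /ki /hi|f args] //; rewrite hh kh. Qed.

Lemma sat_embedding (A B : algebra L) (e : A -> B) (v : nat -> A) phi :
  is_embedding e -> qfree phi -> (sat (fun n => e (v n)) phi <-> sat v phi).
Proof.
move=> [ei he]; elim: phi => //= [t1 t2|p IHp|p IHp q IHq|p IHp q IHq|p IHp q IHq] qf.
- by rewrite !eval_hom //; split=> [/ei|->].
- by rewrite IHp.
all: by case: qf => ? ?; rewrite IHp // IHq.
Qed.

Lemma sat_universal_down (A B : algebra L) (e : A -> B) phi (v : nat -> A) :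
  is_embedding e -> universal phi -> sat (fun n => e (v n)) phi -> sat v phi.
Proof.
move=> he hu; elim: hu v => [p qp|x p _ IH] v; first by move/(sat_embedding v he qp).
by move=> /= H a; apply: IH; rewrite map_upd; apply: H.
Qed.

Definition close_all (xs : seq nat) phi : formula L := foldr (@All L) phi xs.

Lemma holds_close_all (A : algebra L) xs phi :
  holds A (close_all xs phi) <-> holds A phi.
Proof.
elim: xs => [|x xs IH] //; rewrite -IH; split.
- by move=> H v; rewrite -(upd_id v x); apply: H.
- by move=> H v a; apply: H.
Qed.

Lemma universal_close_all xs phi : qfree phi -> universal (close_all xs phi).
Proof. by move=> qf; elim: xs => [|x xs IH] /=; constructor. Qed.

Lemma sentence_close_all xs phi : fml_in (in_vars xs) phi -> sentence (close_all xs phi).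
Proof.
suff gen P : fml_in (fun n => n \in xs \/ P n) phi -> fml_in P (close_all xs phi).
  by move=> H; apply: gen; apply: fml_in_mono H => n; left.
elim: xs P => [|x xs IH] P /= H; first by apply: fml_in_mono H => n [].
apply: IH; apply: fml_in_mono H => n; rewrite inE => -[/orP[/eqP|]|]; tauto.
Qed.

Fixpoint term_vars t : seq nat :=
  match t with
  | Var n => [:: n]
  | App f args => flatten [seq term_vars (args i) | i <- enum 'I_(arity f)]
  end.

Lemma term_in_vars t : term_in (in_vars (term_vars t)) t.
Proof.
elim: t => [n|f args IH] /=; first by rewrite /in_vars inE.
move=> i; apply: term_in_mono (IH i) => n Hn.
by apply/flattenP; exists (term_vars (args i)) => //; apply: map_f; rewrite mem_enum.
Qed.

Lemma fml_vars_finite phi : exists xs, fml_in (in_vars xs) phi.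
Proof.
have catl xs ys n : in_vars xs n -> in_vars (xs ++ ys) n by rewrite /in_vars mem_cat => ->.
have catr xs ys n : in_vars ys n -> in_vars (xs ++ ys) n.
  by rewrite /in_vars mem_cat => ->; rewrite orbT.
elim: phi => [|t1 t2|p [xs H]|p [xs H] q [ys H']|p [xs H] q [ys H']|p [xs H] q [ys H']
             |x p [xs H]|x p [xs H]] /=.
4-6: by exists (xs ++ ys); split; [apply: fml_in_mono H => n; apply: catl
                                   |apply: fml_in_mono H' => n; apply: catr].
- by exists [::].
- exists (term_vars t1 ++ term_vars t2).
  split; [apply: term_in_mono (term_in_vars t1) => n; apply: catl
         |apply: term_in_mono (term_in_vars t2) => n; apply: catr].
- by exists xs.
- by exists xs; apply: fml_in_mono H => n; right.
- by exists xs; apply: fml_in_mono H => n; right.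
Qed.

Lemma qfree_conj_lits (s : seq (literal L)) : qfree (conj_lits s).
Proof. by elim: s => [|[[] e] s IH]. Qed.

Lemma sat_conj_lits_cat (A : algebra L) (v : nat -> A) (s1 s2 : seq (literal L)) :
  sat v (conj_lits (s1 ++ s2)) <-> sat v (conj_lits s1) /\ sat v (conj_lits s2).
Proof. by elim: s1 => [|l s1 IH] /=; [tauto|rewrite IH; tauto]. Qed.

Lemma sat_pos_part (A : algebra L) (v : nat -> A) (s : seq (literal L)) :
  sat v (conj_lits s) -> sat v (conj_eqs (pos_part s)).
Proof. by elim: s => [|[[] e] s IH] //= [H1 /IH]. Qed.

Lemma fml_in_pos_part (P : nat -> Prop) (s : seq (literal L)) :
  fml_in P (conj_lits s) -> fml_in P (conj_eqs (pos_part s)).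
Proof. by elim: s => [|[[] e] s IH] //= [H1 /IH]. Qed.

Lemma sat_big_conj (A : algebra L) (v : nat -> A) (T : Type) (F : T -> formula L)
    (l : seq T) :
  sat v (big_conj (map F l)) <-> forall r, List.In r l -> sat v (F r).
Proof.
elim: l => [|r l IH] /=; first by split=> // _ [].
rewrite IH; split=> [[Hr Hl] r' [<-|/Hl] //|H].
by split=> [|r' Hr']; apply: H; [left|right].
Qed.

Definition disj_conj_lits (ds : seq (seq (literal L))) : formula L :=
  foldr (fun d acc => Disj (conj_lits d) acc) (Fls L) ds.

Fixpoint dnf_and (ds1 ds2 : seq (seq (literal L))) : seq (seq (literal L)) :=
  if ds1 is d :: ds then map (cat d) ds2 ++ dnf_and ds ds2 else [::].

(* [dnf b phi] is a disjunctive normal form of [phi] if [b], of its negation otherwise. *)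
Fixpoint dnf (b : bool) phi : seq (seq (literal L)) :=
  match phi with
  | Fls => if b then [::] else [:: [::]]
  | Eqn t1 t2 => [:: [:: (b, (t1, t2))]]
  | Neg p => dnf (~~ b) p
  | Conj p q => if b then dnf_and (dnf true p) (dnf true q) else dnf false p ++ dnf false q
  | Disj p q => if b then dnf true p ++ dnf true q else dnf_and (dnf false p) (dnf false q)
  | Imp p q => if b then dnf false p ++ dnf true q else dnf_and (dnf true p) (dnf false q)
  | Ex _ _ | All _ _ => [::]
  end.

Section DNF.
Variables (A : algebra L) (v : nat -> A).

Lemma sat_disj_cat ds1 ds2 :
  sat v (disj_conj_lits (ds1 ++ ds2))
  <-> sat v (disj_conj_lits ds1) \/ sat v (disj_conj_lits ds2).
Proof. by elim: ds1 => [|d ds IH] /=; [tauto|rewrite IH; tauto]. Qed.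

Lemma sat_disj_and ds1 ds2 :
  sat v (disj_conj_lits (dnf_and ds1 ds2))
  <-> sat v (disj_conj_lits ds1) /\ sat v (disj_conj_lits ds2).
Proof.
have sat_map d ds : sat v (disj_conj_lits (map (cat d) ds))
    <-> sat v (conj_lits d) /\ sat v (disj_conj_lits ds).
  by elim: ds => [|d' ds IH] /=; [tauto|rewrite IH sat_conj_lits_cat; tauto].
by elim: ds1 => [|d ds IH] /=; [tauto|rewrite sat_disj_cat sat_map IH; tauto].
Qed.

Lemma sat_dnf phi b : qfree phi ->
  sat v (disj_conj_lits (dnf b phi)) <-> (if b then sat v phi else ~ sat v phi).
Proof.
elim: phi b => //= [|t1 t2|p IH|p IHp q IHq|p IHp q IHq|p IHp q IHq] b qf.
- by case: b => /=; tauto.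
- by case: b => /=; tauto.
- rewrite IH //; case: b => /=; first tauto.
  by split=> [H nH|]; [exact: nH H|exact: contrapT].
all: case: qf => qp qq; case: b; rewrite ?sat_disj_and ?sat_disj_cat IHp // IHq //.
all: by case: (pselect (sat v p)); case: (pselect (sat v q)); tauto.
Qed.

End DNF.

End Formulas.

Lemma sval_inj (T : Type) (P : T -> Prop) : injective (@proj1_sig T P).
Proof. by move=> [x Hx] [y Hy] /= E; apply: eq_exist. Qed.

Lemma In_cat (T : Type) (x : T) (s1 s2 : seq T) :
  List.In x (s1 ++ s2) <-> List.In x s1 \/ List.In x s2.
Proof. by elim: s1 => [|y s1 IH] /=; [tauto|rewrite IH; tauto]. Qed.

Lemma ultrafilter_of_base (I J : Type) (B : J -> I -> Prop) (j0 : J) :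
  (forall j k, exists l, forall i, B l i -> B j i /\ B k i) ->
  (forall j, exists i, B j i) ->
  exists U : (I -> Prop) -> Prop, ultrafilter U /\ forall j, U (B j).
Proof.
move=> dir ne.
have FF : Filter (filter_from setT B).
  apply: filter_from_filter; first by exists j0.
  by move=> j k _ _; have [l Hl] := dir j k; exists l => // i /Hl.
have PF : ProperFilter (filter_from setT B).
  by apply: filter_from_proper => j _; have [i Hi] := ne j; exists i.
have [G [GU sub]] := ultraFilterLemma PF.
have GF : ProperFilter G := @ultra_proper _ _ GU.
exists G; split; last by move=> j; apply: sub; exists j.
split.
- exact: filterT.
- exact: (filter_not_empty G).
- by move=> S T GS ST; apply: filterS GS.
- by move=> S T GS GT; apply: (filterI GS GT).
- by move=> S; case: (in_ultra_setVsetC S GU) => H; [left|right].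
Qed.

Section UltrafilterTheory.
Variables (I : Type) (U : (I -> Prop) -> Prop).
Hypothesis HU : ultrafilter U.

Lemma uf_setT : U (fun _ => True). Proof. by case: HU. Qed.
Lemma uf_set0 : ~ U (fun _ => False). Proof. by case: HU. Qed.
Lemma uf_sub (S T : I -> Prop) : U S -> (forall i, S i -> T i) -> U T.
Proof. by case: HU => _ _ H _ _; apply: H. Qed.
Lemma uf_and (S T : I -> Prop) : U S -> U T -> U (fun i => S i /\ T i).
Proof. by case: HU => _ _ _ H _; apply: H. Qed.
Lemma uf_compl (S : I -> Prop) : U S \/ U (fun i => ~ S i).
Proof. by case: HU => _ _ _ _ H; apply: H. Qed.

Lemma uf_nonempty (S : I -> Prop) : U S -> exists i, S i.
Proof.
move=> US; apply: contrapT => nS; apply: uf_set0; apply: (uf_sub US) => i Si.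
by apply: nS; exists i.
Qed.

Lemma uf_not (S : I -> Prop) : U (fun i => ~ S i) <-> ~ U S.
Proof.
split; last by case: (uf_compl S).
by move=> nS US; have [i []] := uf_nonempty (uf_and nS US).
Qed.

Lemma uf_forall_ord n (P : 'I_n -> I -> Prop) :
  (forall j, U (P j)) -> U (fun i => forall j, P j i).
Proof.
elim: n P => [|n IH] P H; first by apply: (uf_sub uf_setT) => i _ [].
have Hl := IH (fun j => P (lift ord0 j)) (fun j => H _).
apply: (uf_sub (uf_and (H ord0) Hl)) => i [H0 Hl'] j.
by case: (unliftP ord0 j) => [j' ->|->].
Qed.

End UltrafilterTheory.

Section Ultraproduct.
Variables (L : language) (I : Type) (A : I -> algebra L) (U : (I -> Prop) -> Prop).
Hypothesis HU : ultrafilter U.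

Definition ueq (x y : forall i, A i) : Prop := U (fun i => x i = y i).

Lemma ueq_refl x : ueq x x.
Proof. by apply: (uf_sub HU (uf_setT HU)). Qed.
Lemma ueq_trans x y z : ueq x y -> ueq y z -> ueq x z.
Proof. by move=> Hxy Hyz; apply: (uf_sub HU (uf_and HU Hxy Hyz)) => i [-> ->]. Qed.
Lemma ueq_sym x y : ueq x y -> ueq y x.
Proof. by move=> H; apply: (uf_sub HU H) => i ->. Qed.

(* The ultraproduct is carried by the [ueq]-classes, each represented as a predicate. *)
Definition uclass_type : Type := {P : (forall i, A i) -> Prop | exists x, P = ueq x}.
Definition uclass (x : forall i, A i) : uclass_type := exist _ (ueq x) (ex_intro _ x erefl).
Definition urep (c : uclass_type) : forall i, A i := proj1_sig (cid (proj2_sig c)).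

Lemma urepK c : uclass (urep c) = c.
Proof. by case: c => P H; apply: sval_inj; rewrite /urep /=; case: (cid H). Qed.

Lemma uclass_eq x y : uclass x = uclass y <-> ueq x y.
Proof.
split=> [/(congr1 (@proj1_sig _ _)) /= ->|H]; first exact: ueq_refl.
apply: sval_inj; apply: funext => z; apply: propext.
by split; [apply: ueq_trans (ueq_sym H)|apply: ueq_trans H].
Qed.

Definition ultraprod : algebra L :=
  @Defs.Algebra L uclass_type
    (fun f args => uclass (fun i => interp (A i) f (fun j => urep (args j) i))).

Lemma uclass_interp (f : Defs.fsym L) (xs : 'I_(arity f) -> forall i, A i) :
  uclass (fun i => interp (A i) f (fun j => xs j i))
  = interp ultraprod f (fun j => uclass (xs j)).
Proof.
apply/uclass_eq; have H j : U (fun i => xs j i = urep (uclass (xs j)) i).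
  by apply/uclass_eq; rewrite urepK.
apply: (uf_sub HU (uf_forall_ord HU H)) => i Hi; congr (interp (A i) f).
by apply: funext => j; rewrite Hi.
Qed.

Lemma ultraprodP : is_ultraproduct A U ultraprod.
Proof.
exists uclass; split; [|exact: uclass_interp|exact: uclass_eq].
by move=> c; exists (urep c); apply: urepK.
Qed.

Lemma eval_uclass (v : forall i, nat -> A i) (t : term L) :
  eval (A := ultraprod) (fun n => uclass (fun i => v i n)) t = uclass (fun i => eval (v i) t).
Proof.
elim: t => [n|f args IH] //=; rewrite (uclass_interp (fun j i => eval (v i) (args j))).
by congr (interp ultraprod f); apply: funext => j; apply: IH.
Qed.

Lemma los_qfree (phi : formula L) (v : forall i, nat -> A i) : qfree phi ->
  sat (A := ultraprod) (fun n => uclass (fun i => v i n)) phi <-> U (fun i => sat (v i) phi).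
Proof.
elim: phi => //= [|t1 t2|p IH|p IHp q IHq|p IHp q IHq|p IHp q IHq] qf.
- by split=> // /uf_set0.
- by rewrite !eval_uclass uclass_eq.
- by rewrite IH // -(uf_not HU).
- case: qf => qp qq; rewrite IHp // IHq //; split=> [[]|H]; first exact: uf_and.
  by split; apply: (uf_sub HU H) => i [].
- case: qf => qp qq; rewrite IHp // IHq //; split=> [[] H|H].
  + by apply: (uf_sub HU H) => i; left.
  + by apply: (uf_sub HU H) => i; right.
  apply: contrapT => nH; have /(uf_not HU) nP : ~ U (fun i => sat (v i) p) by tauto.
  have /(uf_not HU) nQ : ~ U (fun i => sat (v i) q) by tauto.
  by have [i] := uf_nonempty HU (uf_and HU H (uf_and HU nP nQ)); tauto.
- case: qf => qp qq; rewrite IHp // IHq //; split=> [H|H Hp].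
  + case: (uf_compl HU (fun i => sat (v i) p)) => Hp; last by apply: (uf_sub HU Hp).
    by apply: (uf_sub HU (uf_and HU Hp (H Hp))) => i [].
  + by apply: (uf_sub HU (uf_and HU H Hp)) => i [/[apply]].
Qed.

End Ultraproduct.

Section ConstantElement.
Variables (L : language) (hc : has_constant L).

Definition const_elem (B : algebra L) : B :=
  let: exist c Hc := cid hc in
  interp B c (fun i => False_rect B (Bool.diff_false_true (ltn_ord (cast_ord Hc i)))).

End ConstantElement.

Section Requirements.
Variables (L : language) (A : algebra L).

(* The diagram requirements [ReqOp] and [ReqNeq] (jointly: [h] is an embedding) are
   encoded like [ReqExt], with [req_var] a dummy variable. *)
Inductive requirement : Type :=
| ReqOp (f : Defs.fsym L) (args : 'I_(arity f) -> A)
| ReqNeq (a1 a2 : A)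
| ReqExt (y : nat) (psi : seq (literal L)) (a : nat -> A).

Definition req_fml (r : requirement) : formula L :=
  match r with
  | ReqOp f _ => Eqn (App (fun j : 'I_(arity f) => Var j)) (Var (arity f))
  | ReqNeq _ _ => Neg (Eqn (Var 0) (Var 1))
  | ReqExt _ psi _ => conj_lits psi
  end.

Definition req_par (r : requirement) : nat -> A :=
  match r with
  | ReqOp f args => fun n => if insub n is Some j then args j else interp A f args
  | ReqNeq a1 a2 => fun n => if n == 0 then a1 else a2
  | ReqExt _ _ a => a
  end.

Definition req_var (r : requirement) : nat :=
  match r with
  | ReqOp f _ => (arity f).+1
  | ReqNeq _ _ => 2
  | ReqExt y _ _ => y
  end.

Definition diagram_req (r : requirement) : Prop :=
  match r with
  | ReqOp _ _ => True
  | ReqNeq a1 a2 => a1 <> a2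
  | ReqExt _ _ _ => False
  end.

Definition meets (B : algebra L) (h : A -> B) (r : requirement) : Prop :=
  exists b : B, sat (upd (fun n => h (req_par r n)) (req_var r) b) (req_fml r).

Lemma qfree_req_fml r : qfree (req_fml r).
Proof. by case: r => //= *; apply: qfree_conj_lits. Qed.

Lemma meets_op (B : algebra L) (h : A -> B) f (args : 'I_(arity f) -> A) :
  meets h (ReqOp args) <-> h (interp A f args) = interp B f (fun j => h (args j)).
Proof.
have E (b : B) : sat (upd (fun n => h (req_par (ReqOp args) n)) (arity f).+1 b)
    (req_fml (ReqOp args)) <-> h (interp A f args) = interp B f (fun j => h (args j)).
  rewrite /= {2}/upd (ltn_eqF (ltnSn _)) insubF ?ltnn //.
  have -> : (fun j : 'I_(arity f) => upd (fun n => h (req_par (ReqOp args) n)) (arity f).+1 b j)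
      = (fun j => h (args j)).
    apply: funext => j; rewrite /upd ltn_eqF /= ?valK //.
    exact: leq_trans (ltn_ord j) _.
  by split=> ->.
by split=> [[b /E] //|/E H]; exists (h (interp A f args)).
Qed.

Lemma meets_neq (B : algebra L) (h : A -> B) a1 a2 :
  meets h (ReqNeq a1 a2) <-> h a1 <> h a2.
Proof. by split=> [[]|H]; last exists (h a1). Qed.

Lemma meets_comp (B C : algebra L) (h : A -> B) (k : B -> C) r :
  is_embedding k -> meets h r -> meets (fun x => k (h x)) r.
Proof.
move=> hk [b Hb]; exists (k b); rewrite -map_upd.
exact/(sat_embedding _ hk (qfree_req_fml r)).
Qed.

Lemma meets_diagram (B : algebra L) (h : A -> B) :
  (forall r, diagram_req r -> meets h r) <-> is_embedding h.
Proof.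
split=> [H|[hi hh] [f args|a1 a2|//] /= Hr].
- split=> [a1 a2 E|f args]; last exact/meets_op/H.
  by apply: contrapT => /(H (ReqNeq a1 a2)) /meets_neq; apply.
- exact/meets_op/hh.
- by apply/meets_neq => /hi.
Qed.

End Requirements.

Section Compactness.
Variables (L : language) (K : algebra L -> Prop).
Hypothesis HK : ultraprod_closed K.
Hypothesis hc : has_constant L.

(* The ultraproduct, over the finite lists of requirements, of algebras meeting them:
   the ultrafilter contains, for each list, the lists extending it. *)
Lemma compactness (M : algebra L) (Req : requirement M -> Prop) :
  (forall l : seq (requirement M), (forall r, List.In r l -> Req r) ->
     exists (B : algebra L) (h : M -> B), K B /\ forall r, List.In r l -> meets h r) ->
  exists (B : algebra L) (h : M -> B), K B /\ forall r, Req r -> meets h r.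
Proof.
move=> fin; pose R := {r | Req r}.
have fin' (i : seq R) :
    exists (B : algebra L) (h : M -> B), K B /\ forall r : R, List.In r i -> meets h (sval r).
  have [|B [h [KB Hh]]] := fin (map sval i).
    by move=> r /List.in_map_iff [x [<- _]]; exact: (svalP x).
  by exists B, h; split=> // r Hr; apply/Hh/List.in_map.
pose B i := sval (cid (fin' i)).
pose h i : M -> B i := sval (cid (svalP (cid (fin' i)))).
have spec i : K (B i) /\ forall r : R, List.In r i -> meets (h i) (sval r).
  exact: svalP (cid (svalP (cid (fin' i)))).
have [U [HU Ufin]] : exists U : (seq R -> Prop) -> Prop, ultrafilter U /\
    forall l, U (fun i => forall r, List.In r l -> List.In r i).
  apply: (ultrafilter_of_base [::]); last by move=> l; exists l.
  by move=> j k; exists (j ++ k) => i Hi; split=> r Hr; apply/Hi/In_cat; tauto.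
pose w (r : requirement M) i : B i :=
  if pselect (meets (h i) r) is left E then sval (cid E) else const_elem hc (B i).
exists (ultraprod B U), (fun m => uclass U (fun i => h i m)); split.
  exact: HK HU (fun i => (spec i).1) (ultraprodP B HU).
move=> r Hr; exists (uclass U (w r)).
have -> : upd (fun n => uclass U (fun i => h i (req_par r n))) (req_var r) (uclass U (w r))
    = (fun n => uclass U (fun i => upd (fun n => h i (req_par r n)) (req_var r) (w r i) n)).
  by apply: funext => n; rewrite /upd; case: eqP.
apply/(los_qfree HU _ (qfree_req_fml r)).
apply: (uf_sub HU (Ufin [:: exist _ r Hr])) => i /(_ _ (or_introl erefl)) /(spec i).2 /= Hri.
by rewrite /w; case: pselect => // E; apply: (svalP (cid E)).
Qed.

End Compactness.

Section Subalgebra.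
Variables (L : language) (B : algebra L) (S : B -> Prop).
Hypothesis S_closed : forall (f : Defs.fsym L) (args : 'I_(arity f) -> B),
  (forall j, S (args j)) -> S (interp B f args).

Definition subalg : algebra L :=
  @Defs.Algebra L {b | S b}
    (fun f args => exist _ _ (S_closed (fun j => svalP (args j)))).

Lemma sval_embedding : is_embedding (fun c : subalg => sval c).
Proof. by split=> // c1 c2; apply: sval_inj. Qed.

End Subalgebra.

Section GeneratedSubalgebra.
Variables (L : language) (hc : has_constant L).
Variables (B : algebra L) (xs : seq nat) (a : nat -> B).

Definition gen_by (b : B) : Prop := exists t, term_in (in_vars xs) t /\ eval a t = b.

Lemma gen_by_closed (f : Defs.fsym L) (args : 'I_(arity f) -> B) :
  (forall j, gen_by (args j)) -> gen_by (interp B f args).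
Proof.
move=> H; exists (App (fun j => sval (cid (H j)))); split=> [j|/=].
  exact: (svalP (cid (H j))).1.
by congr (interp B f); apply: funext => j; apply: (svalP (cid (H j))).2.
Qed.

Definition gen_subalg : algebra L := subalg gen_by_closed.

Definition gen_assign (n : nat) : gen_subalg :=
  if pselect (gen_by (a n)) is left H then exist _ (a n) H else const_elem hc _.

Lemma gen_assign_val n : n \in xs -> sval (gen_assign n) = a n.
Proof. by move=> Hn; rewrite /gen_assign; case: pselect => // -[]; exists (Var n). Qed.

Lemma gen_assign_generated : generated_by xs gen_assign.
Proof.
move=> c; have [t [Ht Et]] := svalP c; exists t; split=> //; apply: sval_inj.
rewrite -Et -(eval_hom _ _ (sval_embedding gen_by_closed).2).
by apply: (eq_in_eval Ht) => n; apply: gen_assign_val.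
Qed.

End GeneratedSubalgebra.

Section ModelsOfTh.
Variables (L : language) (K : algebra L -> Prop).
Hypothesis HK : universal_class K.
Hypothesis hc : has_constant L.
Variable M : algebra L.
Hypothesis HM : model (Th K) M.

Lemma model_Th_sat (v : nat -> M) phi :
  sat v phi -> exists (B : algebra L) (w : nat -> B), K B /\ sat w phi.
Proof.
move=> Hv; apply: contrapT => nE; have [xs Hxs] := fml_vars_finite phi.
have : Th K (close_all xs (Neg phi)).
  split; first exact: sentence_close_all.
  by move=> B KB; apply/holds_close_all => w Hw; apply: nE; exists B, w.
by move/HM/holds_close_all/(_ v).
Qed.

Definition req_elems (r : requirement M) : seq (classicType M) :=
  match r with
  | ReqOp f args => interp M f args :: [seq args j | j <- enum 'I_(arity f)]
  | ReqNeq a1 a2 => [:: a1; a2]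
  | ReqExt _ _ _ => [::]
  end.

(* [r] as a formula, the element [m] of [M] being named by the variable [idx m]. *)
Definition diag_fml (idx : M -> nat) (r : requirement M) : formula L :=
  match r with
  | ReqOp f args => Eqn (App (fun j => Var (idx (args j)))) (Var (idx (interp M f args)))
  | ReqNeq a1 a2 => Neg (Eqn (Var (idx a1)) (Var (idx a2)))
  | ReqExt _ _ _ => Tru L
  end.

Lemma sat_diag_fml (idx : M -> nat) (B : algebra L) (w : nat -> B) r : diagram_req r ->
  sat w (diag_fml idx r) <-> meets (fun m => w (idx m)) r.
Proof. by case: r => [f args|a1 a2|//] _ /=; rewrite ?meets_neq // meets_op; split=> ->. Qed.

Lemma model_Th_diagram_finite (l : seq (requirement M)) :
  (forall r, List.In r l -> diagram_req r) ->
  exists (B : algebra L) (h : M -> B), K B /\ forall r, List.In r l -> meets h r.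
Proof.
move=> Hl.
have memE r (m : classicType M) :
    List.In r l -> m \in req_elems r -> m \in flatten [seq req_elems r | r <- l].
  by elim: l {Hl} => //= r' l IH [<-|/IH H] Hm; rewrite mem_cat ?Hm ?H ?orbT.
pose E := flatten [seq req_elems r | r <- l].
pose idx (m : M) := index (m : classicType M) E.
have nth_idx r m : List.In r l -> m \in req_elems r -> nth (const_elem hc M) E (idx m) = m.
  by move=> Hr Hm; apply: (@nth_index (classicType M)); apply: memE Hr Hm.
have [|B [w [KB Hw]]] := @model_Th_sat (nth (const_elem hc M) E) (big_conj (map (diag_fml idx) l)).
  apply/sat_big_conj => r Hr; apply/sat_diag_fml; first exact: Hl.
  case: r Hr => [f args|a1 a2|y psi a /Hl //] Hr /=.
  - apply/meets_op; rewrite (nth_idx _ _ Hr) ?mem_head //.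
    congr (interp M f); apply: funext => j.
    by rewrite (nth_idx _ _ Hr) // inE map_f ?mem_enum ?orbT.
  - by apply/meets_neq; rewrite !(nth_idx _ _ Hr) ?inE ?eqxx ?orbT //; apply: (Hl _ Hr).
exists B, (fun m => w (idx m)); split=> // r Hr.
by apply/sat_diag_fml; [exact: Hl|move/sat_big_conj: Hw; apply].
Qed.

Lemma model_Th_in_K : K M.
Proof.
have [B [h [KB Hh]]] := compactness (let: And3 _ _ up := HK in up) hc model_Th_diagram_finite.
by case: HK => _ sub _; apply: (sub _ _ h) KB; apply/meets_diagram.
Qed.

End ModelsOfTh.

Lemma nat_ind_from (m : nat) (P : nat -> Prop) :
  P m -> (forall k, m <= k -> P k -> P k.+1) -> forall k, m <= k -> P k.
Proof.
move=> Pm PS k /subnK <-; elim: (k - m) => [|d IH]; first by rewrite add0n.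
by rewrite addSn; apply: PS IH; apply: leq_addl.
Qed.

Lemma nat_ultrafilter :
  exists U : (nat -> Prop) -> Prop, ultrafilter U /\ forall j, U (fun k => j <= k).
Proof.
apply: (ultrafilter_of_base 0); last by move=> j; exists j.
by move=> j k; exists (maxn j k) => i; rewrite geq_max => /andP.
Qed.

Section ChainLimit.
Variables (L : language) (C : nat -> algebra L) (ce : forall n, C n -> C n.+1).
Hypothesis ce_emb : forall n, is_embedding (@ce n).
Variable c0 : C 0.

(* [lift_to x k] is the image of [x : C m] in [C k] for [m <= k]; junk below [m]. *)
Fixpoint lift_to (m : nat) (x : C m) (k : nat) {struct k} : C k :=
  match eq_comparable m k with
  | left H => eq_rect m (fun k => carrier (C k)) x k H
  | right _ => if k is k'.+1 then ce (lift_to x k') else c0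
  end.

Lemma lift_to_at m (x : C m) : lift_to x m = x.
Proof.
have -> : lift_to x m = match eq_comparable m m with
  | left H => eq_rect m (fun k => carrier (C k)) x m H
  | right _ => if m is k'.+1 then ce (lift_to x k') else c0
  end by case: m x.
by case: eq_comparable => // H; rewrite (eq_axiomK H).
Qed.

Lemma lift_toS m (x : C m) k : m <= k -> lift_to x k.+1 = ce (lift_to x k).
Proof. by move=> Hmk /=; case: eq_comparable => // H; exfalso; move: Hmk; rewrite H ltnn. Qed.

Lemma lift_to_lift m (x : C m) k :
  m <= k -> forall j, k <= j -> lift_to (lift_to x k) j = lift_to x j.
Proof.
move=> Hmk; apply: nat_ind_from => [|j Hkj IH]; first by rewrite lift_to_at.
by rewrite lift_toS // IH lift_toS // (leq_trans Hmk Hkj).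
Qed.

Lemma lift_to_interp m (f : Defs.fsym L) (args : 'I_(arity f) -> C m) k : m <= k ->
  lift_to (interp (C m) f args) k = interp (C k) f (fun i => lift_to (args i) k).
Proof.
move: k; apply: nat_ind_from => [|k Hmk IH].
  by rewrite lift_to_at; congr (interp _ f); apply: funext => i; rewrite lift_to_at.
rewrite lift_toS // IH (ce_emb k).2; congr (interp _ f).
by apply: funext => i; rewrite lift_toS.
Qed.

Lemma lift_to_inj m (x y : C m) k : m <= k -> lift_to x k = lift_to y k -> x = y.
Proof.
move: k; apply: nat_ind_from => [|k Hmk IH]; first by rewrite !lift_to_at.
by rewrite !lift_toS // => /(ce_emb k).1.
Qed.

Let U : (nat -> Prop) -> Prop := sval (cid nat_ultrafilter).
Let HU : ultrafilter U. Proof. exact: (svalP (cid nat_ultrafilter)).1. Qed.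
Let U_tail j : U (fun k => j <= k). Proof. exact: (svalP (cid nat_ultrafilter)).2. Qed.

Definition lim_point m (x : C m) : ultraprod C U := uclass U (lift_to x).

Lemma lim_point_lift m (x : C m) k : m <= k -> lim_point (lift_to x k) = lim_point x.
Proof. by move=> Hmk; apply/(uclass_eq HU); apply: (uf_sub HU (U_tail k)); apply: lift_to_lift. Qed.

Lemma lim_point_interp m (f : Defs.fsym L) (args : 'I_(arity f) -> C m) :
  lim_point (interp (C m) f args) = interp (ultraprod C U) f (fun i => lim_point (args i)).
Proof.
rewrite /lim_point -(uclass_interp HU); apply/(uclass_eq HU).
by apply: (uf_sub HU (U_tail m)) => k; apply: lift_to_interp.
Qed.

Lemma lim_point_inj m : injective (@lim_point m).
Proof.
move=> x y /(uclass_eq HU) E; have [k [Hmk]] := uf_nonempty HU (uf_and HU (U_tail m) E).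
exact: lift_to_inj.
Qed.

Definition in_limit (p : ultraprod C U) : Prop := exists m (x : C m), p = lim_point x.

Lemma in_limit_closed (f : Defs.fsym L) (args : 'I_(arity f) -> ultraprod C U) :
  (forall i, in_limit (args i)) -> in_limit (interp _ f args).
Proof.
move=> H; pose m i := sval (cid (H i)).
pose x i : C (m i) := sval (cid (svalP (cid (H i)))).
have Ex i : args i = lim_point (x i) := svalP (cid (svalP (cid (H i)))).
pose k := \max_i m i; exists k, (interp (C k) f (fun i => lift_to (x i) k)).
rewrite lim_point_interp; congr (interp _ f); apply: funext => i.
by rewrite lim_point_lift ?Ex //; apply: leq_bigmax.
Qed.

Definition limit : algebra L := subalg in_limit_closed.

Definition to_limit m (x : C m) : limit :=
  exist _ (lim_point x) (ex_intro _ m (ex_intro _ x erefl)).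

Lemma to_limit_embedding m : is_embedding (@to_limit m).
Proof.
split=> [x y /(congr1 sval) /lim_point_inj //|f args].
by apply: sval_inj; apply: lim_point_interp.
Qed.

Lemma to_limit_ce m (x : C m) : to_limit (ce x) = to_limit x.
Proof. by apply: sval_inj; rewrite /= -(lim_point_lift x (leqnSn m)) lift_toS // lift_to_at. Qed.

Lemma limit_tuple (a : nat -> limit) (xs : seq nat) :
  exists k (a' : nat -> C k), forall n, n \in xs -> a n = to_limit (a' n).
Proof.
pose m n := sval (cid (svalP (a n))).
pose x n : C (m n) := sval (cid (svalP (cid (svalP (a n))))).
have Ex n : sval (a n) = lim_point (x n) := svalP (cid (svalP (cid (svalP (a n))))).
pose k := \max_(n <- xs) m n; exists k, (fun n => lift_to (x n) k) => n Hn.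
by apply: sval_inj; rewrite /= lim_point_lift ?Ex //; apply: leq_bigmax_seq.
Qed.

Lemma limit_in_K (K : algebra L -> Prop) :
  universal_class K -> (forall n, K (C n)) -> K limit.
Proof.
case=> _ sub up KC; apply: sub (sval_embedding in_limit_closed) _.
exact: up HU KC (ultraprodP C HU).
Qed.

End ChainLimit.

Section ModelCompletion.
Variables (L : language) (K : algebra L -> Prop).
Hypothesis hc : has_constant L.
Hypothesis HK : universal_class K.
Hypothesis HAP : amalgamation K.
Hypothesis HVP : var_projection K.
Hypothesis HCM : cons_model_ext K.

Let K_sub : sub_closed K. Proof. by case: HK. Qed.

(* [theta] is the quantifier-free equivalent of [Ex y psi] in the model completion. *)
Definition ex_elim (xs : seq nat) (y : nat) (psi : seq (literal L)) (theta : formula L) :=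
  [/\ y \notin xs /\ fml_in (in_vars_y xs y) (conj_lits psi),
      qfree theta /\ fml_in (in_vars xs) theta,
      Kmodels K (Imp (conj_lits psi) theta)
    & forall (B : algebra L) (a : nat -> B), K B -> sat a theta ->
        exists (E : algebra L) (k : B -> E) (e : E),
          [/\ K E, is_embedding k & sat (upd (fun n => k (a n)) y e) (conj_lits psi)]].

(* In the subalgebra generated by the parameters, [xi] supplies the equations that the
   conservative model extension property requires; the extension it yields is
   amalgamated with [B] over that subalgebra. *)
Lemma ex_elim_exists xs y psi : y \notin xs -> fml_in (in_vars_y xs y) (conj_lits psi) ->
  exists theta, ex_elim xs y psi theta.
Proof.
move=> Hy Hf; have [chi [qc fc Kc Hc]] := HCM Hy Hf.
have [xi [qx fx Kx Hx]] := HVP Hy (fml_in_pos_part Hf).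
exists (Conj chi xi); split=> //.
  by move=> A KA v /= Hp; split; [apply: Kc Hp|apply: Kx (sat_pos_part Hp)].
move=> B a KB [sc sx]; pose G := gen_subalg xs a; pose ga := gen_assign hc xs a.
have gval_emb : is_embedding (fun c : G => sval c) := sval_embedding _.
have KG : K G := K_sub gval_emb KB.
have agree n : in_vars xs n -> sval (ga n) = a n := @gen_assign_val _ hc _ xs a n.
have sat_G phi : qfree phi -> fml_in (in_vars xs) phi -> sat a phi -> sat ga phi.
  by move=> qp fp sp; apply/(sat_embedding _ gval_emb qp); apply/(eq_in_sat fp agree).
have [D [e [d [KD he sD]]]] := Hc G ga KG (@gen_assign_generated _ hc _ xs a) (sat_G _ qc fc sc)
  (fun eps fe Ke => Hx eps fe Ke G KG ga (sat_G _ qx fx sx)).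
have [E [k1 [k2 [KE hk1 hk2 com]]]] := HAP KG KB KD gval_emb he.
exists E, k1, (k2 d); split=> //.
rewrite -(sat_embedding _ hk2 (qfree_conj_lits psi)) map_upd in sD.
by apply: eq_in_sat_upd Hf _ sD => n Hn; rewrite -com agree.
Qed.

Definition realizes_elims (A B : algebra L) (h : A -> B) : Prop :=
  forall xs y psi theta, ex_elim xs y psi theta -> forall a : nat -> A,
    sat a theta -> exists b, sat (upd (fun n => h (a n)) y b) (conj_lits psi).

Definition elim_closed (N : algebra L) : Prop := realizes_elims (fun x : N => x).

Definition step_req (A : algebra L) (r : requirement A) : Prop :=
  if r is ReqExt y psi a then exists xs theta, ex_elim xs y psi theta /\ sat a theta
  else diagram_req r.

Lemma step_finite (A : algebra L) (l : seq (requirement A)) :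
  K A -> (forall r, List.In r l -> step_req r) ->
  exists (B : algebra L) (h : A -> B),
    [/\ K B, is_embedding h & forall r, List.In r l -> meets h r].
Proof.
move=> KA; elim: l => [_|r l IH /= Hl]; first by exists A, id; split.
have [B [h [KB hh Hh]]] := IH (fun r' Hr' => Hl r' (or_intror Hr')).
have {Hl} := Hl r (or_introl erefl).
case: r => [f args|a1 a2|y psi a [xs [theta [[_ [qt _] _ ext] st]]]].
1,2: by move=> Hr; exists B, h; split=> // r' [<-|/Hh //]; move/meets_diagram: hh; apply.
have [E [k [e [KE hk He]]]] := ext B _ KB (proj2 (sat_embedding a hh qt) st).
exists E, (fun x => k (h x)); split=> //; first exact: embedding_comp.
by move=> r' [<-|/Hh /(meets_comp hk)]; first exists e.
Qed.

Lemma step (A : algebra L) : K A ->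
  exists (B : algebra L) (h : A -> B), [/\ K B, is_embedding h & realizes_elims h].
Proof.
move=> KA; have [B [h [KB Hh]]] := compactness (let: And3 _ _ up := HK in up) hc
  (fun l Hl => let: ex_intro B (ex_intro h (And3 KB _ Hh)) := step_finite KA Hl in
               ex_intro _ B (ex_intro _ h (conj KB Hh))).
exists B, h; split=> //.
  by apply/meets_diagram => -[f args|a1 a2|//] Hr; apply: Hh.
by move=> xs y psi theta He a Ha; apply: (Hh (ReqExt y psi a)); exists xs, theta.
Qed.

Definition stage : Type := {A : algebra L | K A}.

Definition next_alg (s : stage) : algebra L := sval (cid (step (svalP s))).
Definition next_map (s : stage) : sval s -> next_alg s :=
  sval (cid (svalP (cid (step (svalP s))))).
Lemma next_spec (s : stage) :
  [/\ K (next_alg s), is_embedding (@next_map s) & realizes_elims (@next_map s)].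
Proof. exact: svalP (cid (svalP (cid (step (svalP s))))). Qed.

Fixpoint chain (s : stage) (n : nat) : stage :=
  if n is n'.+1 then
    exist _ (next_alg (chain s n')) (let: And3 KB _ _ := next_spec (chain s n') in KB)
  else s.

Lemma ec_extension (A : algebra L) : K A ->
  exists (N : algebra L) (h : A -> N), [/\ K N, is_embedding h & elim_closed N].
Proof.
move=> KA; pose s : stage := exist _ A KA.
pose C n := sval (chain s n); pose ce n : C n -> C n.+1 := @next_map (chain s n).
have ce_emb n : is_embedding (@ce n) by case: (next_spec (chain s n)).
have ce_real n : realizes_elims (@ce n) by case: (next_spec (chain s n)).
pose c0 := const_elem hc (C 0).
exists (limit ce_emb c0), (@to_limit _ _ _ ce_emb c0 0); split.
- by apply: limit_in_K => // n; apply: svalP.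
- exact: (to_limit_embedding ce_emb c0 0).
move=> xs y psi theta He a Ha; have [k [a' Ea]] := limit_tuple a xs.
case: (He) => [[_ Hf] [qt ft] _ _].
have Ha' : sat a' theta.
  apply/(sat_embedding _ (to_limit_embedding ce_emb c0 k) qt).
  by apply: (eq_in_sat ft _).1 Ha => n /Ea.
have [b Hb] := ce_real k _ _ _ _ He a' Ha'; exists (to_limit ce_emb c0 b).
rewrite -(sat_embedding _ (to_limit_embedding ce_emb c0 k.+1) (qfree_conj_lits psi)) map_upd in Hb.
by apply: eq_in_sat_upd Hf _ Hb => n Hn; rewrite to_limit_ce Ea.
Qed.

Definition Tstar : theory L := fun phi =>
  sentence phi /\
  ((universal phi /\ Kmodels K phi) \/
   exists xs y psi theta, ex_elim xs y psi theta /\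
     phi = close_all xs (Imp theta (Ex y (conj_lits psi)))).

Lemma elim_closed_model_Tstar (N : algebra L) : K N -> elim_closed N -> model Tstar N.
Proof.
move=> KN ecN phi [_ [[_ /(_ N KN) //]|[xs [y [psi [theta [He ->]]]]]]].
by apply/holds_close_all => v /= /(ecN _ _ _ _ He).
Qed.

Lemma Tstar_ex_elim (N : algebra L) xs y psi theta : model Tstar N -> ex_elim xs y psi theta ->
  forall v : nat -> N, sat v (Ex y (conj_lits psi)) <-> sat v theta.
Proof.
move=> HN He; case: (He) => [[Hy Hf] [qt ft] Kt _] v; split.
- have : Tstar (close_all (y :: xs) (Imp (conj_lits psi) theta)).
    split; last (left; split=> [|B KB]).
    - apply: sentence_close_all; split.
        by apply: fml_in_mono Hf => n; rewrite /in_vars inE => -[->|->]; rewrite ?eqxx ?orbT.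
      by apply: fml_in_mono ft => n Hn; rewrite /in_vars inE Hn orbT.
    - by apply: universal_close_all; split=> //; apply: qfree_conj_lits.
    - by apply/holds_close_all; apply: Kt.
  move=> /HN /holds_close_all Hax [b /(Hax _) /=].
  by apply: (eq_in_sat ft _).1 => n Hn; rewrite /upd ifN //; apply: contraNneq Hy => <-.
- have : Tstar (close_all xs (Imp theta (Ex y (conj_lits psi)))).
    split; last by right; exists xs, y, psi, theta.
    apply: sentence_close_all; split=> //.
    by apply: fml_in_mono Hf => n [Hn|->]; [right|left].
  by move=> /HN /holds_close_all; apply.
Qed.

Definition Tstar_equiv (phi th : formula L) : Prop :=
  forall N : algebra L, model Tstar N -> forall v : nat -> N, sat v phi <-> sat v th.

Lemma Tstar_qe_conj_lits x (D : seq (literal L)) :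
  exists th, qfree th /\ Tstar_equiv (Ex x (conj_lits D)) th.
Proof.
have [vs Hvs] := fml_vars_finite (conj_lits D); pose xs := [seq n <- vs | n != x].
have Hx : x \notin xs by rewrite mem_filter eqxx.
have Hf : fml_in (in_vars_y xs x) (conj_lits D).
  apply: fml_in_mono Hvs => n Hn; case: (eqVneq n x) => [->|nx]; [right|left] => //.
  by rewrite mem_filter nx.
have [theta He] := ex_elim_exists Hx Hf.
by exists theta; split; [case: He => _ [] | move=> N HN; apply: Tstar_ex_elim He].
Qed.

Lemma Tstar_qe_ex x th : qfree th -> exists th', qfree th' /\ Tstar_equiv (Ex x th) th'.
Proof.
move=> qt; suff [th' [qt' Hth']] : exists th', qfree th' /\
    Tstar_equiv (Ex x (disj_conj_lits (dnf true th))) th'.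
  exists th'; split=> // N HN v; rewrite -Hth' //=.
  by split=> -[a Ha]; exists a; move: Ha; rewrite (sat_dnf _ true qt).
elim: (dnf true th) => [|d ds [th1 [q1 H1]]].
  by exists (Fls L); split=> // N _ v /=; split=> -[].
have [th0 [q0 H0]] := Tstar_qe_conj_lits x d.
exists (Disj th0 th1); split=> // N HN v /=; rewrite -(H0 N HN v) -(H1 N HN v) /=.
by split=> [[a [Ha|Ha]]|[[a Ha]|[a Ha]]]; [left|right|exists a; left|exists a; right]; try exists a.
Qed.

Lemma Tstar_qe phi : exists th, qfree th /\ Tstar_equiv phi th.
Proof.
elim: phi => [|t1 t2|p [th [q H]]|p [th1 [q1 H1]] q [th2 [q2 H2]]
             |p [th1 [q1 H1]] q [th2 [q2 H2]]|p [th1 [q1 H1]] q [th2 [q2 H2]]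
             |x p [th [q H]]|x p [th [q H]]].
- by exists (Fls L).
- by exists (Eqn t1 t2).
- by exists (Neg th); split=> // N HN v /=; rewrite H.
- by exists (Conj th1 th2); split=> // N HN v /=; rewrite H1 // H2.
- by exists (Disj th1 th2); split=> // N HN v /=; rewrite H1 // H2.
- by exists (Imp th1 th2); split=> // N HN v /=; rewrite H1 // H2.
- have [th' [q' H']] := Tstar_qe_ex x q; exists th'; split=> // N HN v; rewrite -H' //=.
  by split=> -[a Ha]; exists a; [rewrite -H|rewrite H].
- have [th' [q' H']] := @Tstar_qe_ex x (Neg th) q; exists (Neg th'); split=> // N HN v.
  rewrite /= -H' //=; split=> [Ha [a]|Hn a]; first by rewrite -H // => /(_ (Ha a)).
  by rewrite H //; apply: contrapT => nH; apply: Hn; exists a.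
Qed.

Lemma Tstar_model_complete : model_complete Tstar.
Proof.
move=> M N e HM HN he; split=> // phi v; have [th [q H]] := Tstar_qe phi.
by rewrite (H M HM) (H N HN) (sat_embedding _ he q).
Qed.

Lemma Tstar_universal_consequences : same_universal_consequences (Th K) Tstar.
Proof.
move=> phi sp up; split=> [H N HN|H M HM].
  by apply: HN; split=> //; left; split=> // A KA; apply: H => psi [_]; apply.
have [N [h [KN hh ecN]]] := ec_extension (model_Th_in_K HK hc HM).
by move=> v; apply: (sat_universal_down hh up); apply: H; apply: elim_closed_model_Tstar.
Qed.

Lemma Tstar_diagram_complete (M : algebra L) : model (Th K) M -> diagram_complete Tstar M.
Proof.
move=> HM; split.
  have [N [h [KN hh ecN]]] := ec_extension (model_Th_in_K HK hc HM).
  by exists N, h; split=> //; apply: elim_closed_model_Tstar.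
move=> N1 N2 e1 e2 HN1 HN2 he1 he2 phi v; have [th [q H]] := Tstar_qe phi.
by rewrite (H N1 HN1) (H N2 HN2) (sat_embedding _ he1 q) (sat_embedding _ he2 q).
Qed.

End ModelCompletion.

Theorem proposition3p4 (L : language) (K : algebra L -> Prop) :
  has_constant L ->
  universal_class K ->
  amalgamation K -> var_projection K -> cons_model_ext K ->
  exists T' : theory L, model_completion (Th K) T'.
Proof.
move=> hc HK HAP HVP HCM; exists (Tstar K); split.
- by move=> phi [].
- exact: Tstar_model_complete.
- exact: Tstar_universal_consequences.
- exact: Tstar_diagram_complete.
Qed.
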